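(* Let $R$ be a Noetherian ring and $J=(f_1,\ldots,f_t)\subseteq I$ ideals such that $J\subseteq I$ is Aluffi torsion-free. For $1\le i\le t$ let $J_i=(f_1,\ldots,f_i)$. If $(J_{i}:_Rf_{i+1})=J_{i}$ for every $1\le i\le t-1$, then $J\subseteq I$ is strongly Aluffi torsion-free (with respect to the generators $f_1,\ldots,f_t$ in this order).
   Context: A pair of ideals $J\subseteq I$ in a ring $R$ is called Aluffi torsion-free if $J\cap I^n=JI^{n-1}$ for all $n\ge1$ (with $I^0=R$). For an ideal $J=(f_1,\ldots,f_t)\subseteq I$ with given ordered generators, the pair is called strongly Aluffi torsion-free if $J_i=(f_1,\ldots,f_i)\subseteq I$ is Aluffi torsion-free for each $i=1,\ldots,t$. *)

From HB Require Import structures.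
From mathcomp Require Import all_boot all_order all_algebra.
Set Implicit Arguments. Unset Strict Implicit. Unset Printing Implicit Defensive.
Import GRing.Theory.
Local Open Scope ring_scope.

Section IdealDefs.
Variable R : comNzRingType.

Definition is_ideal (I : R -> Prop) : Prop :=
  [/\ I 0, (forall x y, I x -> I y -> I (x + y)) & (forall r x, I x -> I (r * x))].

Definition subI (I J : R -> Prop) : Prop := forall x, I x -> J x.
Definition eqI (I J : R -> Prop) : Prop := forall x, I x <-> J x.

Inductive prodI (I J : R -> Prop) : R -> Prop :=
  | prodI0 : prodI I J 0
  | prodI_mul a b : I a -> J b -> prodI I J (a * b)
  | prodI_add x y : prodI I J x -> prodI I J y -> prodI I J (x + y).

Fixpoint powI (I : R -> Prop) (n : nat) : R -> Prop :=
  match n with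
  | O => fun _ => True
  | S m => prodI (powI I m) I
  end.

Definition colonI (J : R -> Prop) (f : R) : R -> Prop := fun x => J (x * f).

(* Ideal generated by f_1, ..., f_i (here f 0, ..., f (i-1)). *)
Definition genI (f : nat -> R) (i : nat) : R -> Prop :=
  fun x => exists r : nat -> R, x = \sum_(k < i) r k * f k.

Definition noetherian : Prop :=
  forall C : nat -> R -> Prop,
    (forall n, is_ideal (C n)) ->
    (forall n, subI (C n) (C n.+1)) ->
    exists N, forall n, (N <= n)%N -> subI (C n) (C N).

Definition aluffi_tf (J I : R -> Prop) : Prop :=
  subI J I /\
  forall n : nat, (0 < n)%N ->
    eqI (fun x => J x /\ powI I n x) (prodI J (powI I n.-1)).

Definition strongly_aluffi_tf (f : nat -> R) (t : nat) (I : R -> Prop) : Prop :=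
  forall i : nat, (1 <= i <= t)%N -> aluffi_tf (genI f i) I.

End IdealDefs.

From HB Require Import structures.
From mathcomp Require Import all_boot all_order all_algebra.
From mathcomp Require Import ring zify.
Local Open Scope ring_scope.
Import GRing.Theory.
Set Implicit Arguments. Unset Strict Implicit.

(* Descending induction on i.  Suppose J_(i+1) ⊆ I is Aluffi torsion-free and
   (J_i : f_(i+1)) = J_i, and let x ∈ J_i ∩ I^(m+1).  Then x ∈ J_(i+1) I^m, so
   x = y + f_(i+1) z with y ∈ J_i I^m and z ∈ I^m.  Now f_(i+1) z = x - y ∈ J_i,
   hence z ∈ J_i ∩ I^m, which by induction on m lies in J_i I^(m-1); since
   f_(i+1) ∈ I we get f_(i+1) z ∈ J_i I^m, and so x ∈ J_i I^m. *)

Section Ideals.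
Variable R : comNzRingType.
Implicit Types (A B C I : R -> Prop) (f : nat -> R).

Lemma ideal0 A : is_ideal A -> A 0.
Proof. by case. Qed.

Lemma idealD A x y : is_ideal A -> A x -> A y -> A (x + y).
Proof. by case=> _ + _; apply. Qed.

Lemma idealMl A r x : is_ideal A -> A x -> A (r * x).
Proof. by case=> _ _; apply. Qed.

Lemma idealMr A r x : is_ideal A -> A x -> A (x * r).
Proof. by rewrite mulrC; apply: idealMl. Qed.

Lemma genI_ideal f i : is_ideal (genI f i).
Proof.
split.
- by exists (fun _ => 0); rewrite big1 // => k _; rewrite mul0r.
- move=> _ _ [r ->] [s ->]; exists (fun k => r k + s k).
  by rewrite -big_split /=; apply: eq_bigr => k _; rewrite mulrDl.
- move=> c _ [r ->]; exists (fun k => c * r k).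
  by rewrite big_distrr /=; apply: eq_bigr => k _; rewrite mulrA.
Qed.

Lemma genI_widen f i j : (i <= j)%N -> subI (genI f i) (genI f j).
Proof.
move=> hij _ [r ->]; exists (fun k => if (k < i)%N then r k else 0).
rewrite (big_ord_widen j (fun k => r k * f k)) // big_mkcond /=.
by apply: eq_bigr => k _; case: ifP => // _; rewrite mul0r.
Qed.

Lemma genI_gen f i : genI f i.+1 (f i).
Proof.
exists (fun l => (l == i)%:R); rewrite big_ord_recr /= eqxx mul1r big1 ?add0r //.
by move=> k _; rewrite (ltn_eqF (ltn_ord k)) mul0r.
Qed.

Lemma genI_S f i x : genI f i.+1 x -> exists a c, genI f i a /\ x = a + c * f i.
Proof.
move=> [r ->]; exists (\sum_(k < i) r k * f k), (r i).
by split; [exists r | rewrite big_ord_recr].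
Qed.

Lemma prodI_ideal A B : is_ideal A -> is_ideal (prodI A B).
Proof.
move=> hA; split=> [|x y|r x]; [exact: prodI0 | exact: prodI_add |].
elim=> [|a b Ha Hb|x1 y1 _ H1 _ H2].
- by rewrite mulr0; apply: prodI0.
- by rewrite mulrA; apply: prodI_mul => //; apply: idealMl.
- by rewrite mulrDr; apply: prodI_add.
Qed.

Lemma prodI_subl A B : is_ideal A -> subI (prodI A B) A.
Proof.
move=> hA x; elim=> [|a b Ha _|x1 y1 _ H1 _ H2].
- exact: ideal0.
- exact: idealMr.
- exact: idealD.
Qed.

Lemma prodI_mulr A B C c z : C c -> prodI A B z -> prodI A (prodI B C) (z * c).
Proof.
move=> Cc; elim=> [|a b Ha Hb|x1 y1 _ H1 _ H2].
- by rewrite mul0r; apply: prodI0.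
- by rewrite -mulrA; apply: prodI_mul => //; apply: prodI_mul.
- by rewrite mulrDl; apply: prodI_add.
Qed.

Lemma powI_ideal I n : is_ideal (powI I n).
Proof. by elim: n => [|n IH] /=; [split | apply: prodI_ideal]. Qed.

Lemma prodI_powI A I n : subI A I -> subI (prodI A (powI I n)) (powI I n.+1).
Proof.
move=> hAI x; elim=> [|a b Ha Hb|x1 y1 _ H1 _ H2] /=.
- exact: prodI0.
- by rewrite mulrC; apply: prodI_mul => //; apply: hAI.
- exact: prodI_add.
Qed.

Lemma prodI_genI_S f i B x : is_ideal B -> prodI (genI f i.+1) B x ->
  exists y z, [/\ prodI (genI f i) B y, B z & x = y + f i * z].
Proof.
move=> hB; elim=> [|a b Ha Hb|x1 y1 _ [y1' [z1 [H1 H1' ->]]] _ [y2' [z2 [H2 H2' ->]]]].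
- by exists 0, 0; split; [apply: prodI0 | apply: ideal0 | rewrite mulr0 addr0].
- have [a' [c [Ha' ->]]] := genI_S Ha.
  exists (a' * b), (c * b); split; [exact: prodI_mul | exact: idealMl | ring].
- exists (y1' + y2'), (z1 + z2); split; [exact: prodI_add | exact: idealD | ring].
Qed.

Lemma aluffi_tf_prod_sub J I n : is_ideal J -> subI J I ->
  subI (prodI J (powI I n)) (fun x => J x /\ powI I n.+1 x).
Proof. by move=> hJ hJI x hx; split; [apply: prodI_subl hx | apply: prodI_powI hx]. Qed.

Section Descent.
Variables (f : nat -> R) (i : nat) (I : R -> Prop).
Hypothesis tfS : aluffi_tf (genI f i.+1) I.
Hypothesis colon_f : eqI (colonI (genI f i) (f i)) (genI f i).

Lemma genI_cap_powI_decomp m x : genI f i x -> powI I m.+1 x ->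
  exists y z, [/\ prodI (genI f i) (powI I m) y, genI f i z, powI I m z
                & x = y + f i * z].
Proof.
move=> hx hp; have hxS := genI_widen (leqnSn i) hx.
have hxp := proj1 (tfS.2 _ (ltn0Sn m) x) (conj hxS hp).
have [y [z [hy hz hxe]]] := prodI_genI_S (powI_ideal I m) hxp.
exists y, z; split=> //; apply/colon_f; rewrite /colonI mulrC.
have -> : f i * z = x + (-1) * y by rewrite hxe; ring.
apply: (idealD (genI_ideal f i)) => //.
exact: idealMl (genI_ideal f i) (prodI_subl (genI_ideal f i) hy).
Qed.

Lemma genI_cap_powI_sub m x : genI f i x -> powI I m.+1 x ->
  prodI (genI f i) (powI I m) x.
Proof.
elim: m x => [|m IH] x hx hp.
  by rewrite -[x]mulr1; apply: prodI_mul.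
have [y [z [hy hzJ hz ->]]] := genI_cap_powI_decomp hx hp.
apply: prodI_add => //; rewrite mulrC; apply: prodI_mulr; last exact: IH.
exact: tfS.1 _ (genI_gen f i).
Qed.

Lemma aluffi_tf_genI_pred : aluffi_tf (genI f i) I.
Proof.
have hJI : subI (genI f i) I by move=> x /(genI_widen (leqnSn i)) /tfS.1.
split=> // -[//|m] _ x; split=> [[hx hp] | hx].
- exact: genI_cap_powI_sub.
- exact: aluffi_tf_prod_sub (genI_ideal f i) hJI x hx.
Qed.

End Descent.
End Ideals.

Lemma downward_ind (P : nat -> Prop) t :
  P t -> (forall i, (i < t)%N -> P i.+1 -> P i) -> forall i, (i <= t)%N -> P i.
Proof.
move=> Pt Pstep i hi; have [d hd] : exists d, t = (i + d)%N by exists (t - i)%N; lia.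
elim: d i hi hd => [|d IH] i hi hd; first by rewrite addn0 in hd; rewrite -hd.
by apply: Pstep; [lia | apply: IH; lia].
Qed.

Theorem proposition2p12 (R : comNzRingType) (f : nat -> R) (t : nat)
    (I : R -> Prop) :
  noetherian R ->
  is_ideal I ->
  aluffi_tf (genI f t) I ->
  (forall i : nat, (1 <= i)%N -> (i <= t - 1)%N ->
     eqI (colonI (genI f i) (f i)) (genI f i)) ->
  strongly_aluffi_tf f t I.
Proof.
move=> _ _ tf_t colon i /andP [i_gt0 i_le_t].
apply: (downward_ind (P := fun j => (1 <= j)%N -> aluffi_tf (genI f j) I)) i_le_t i_gt0.
- by move=> _.
- move=> j j_lt_t tfS j_gt0; apply: aluffi_tf_genI_pred; first exact: tfS.
  by apply: colon => //; lia.
Qed.
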